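(* Let $f_1,\ldots,f_k:\mathbb{R}^n\to\Delta^n$ be the conversion functions of $k$ lossless (resp. finitely lossless) learning dynamics over $n$ actions, and let $\alpha_1,\ldots,\alpha_k\ge 0$ with $\sum_{\ell=1}^k\alpha_\ell=1$. Then the learning dynamic with conversion function $\sum_{\ell=1}^k\alpha_\ell f_\ell$ (the convex combination of the $k$ dynamics with parameters $\alpha_1,\ldots,\alpha_k$) is lossless (resp. finitely lossless).
   Context: $\Delta^n=\{\mathbf{x}\in\mathbb{R}^n: x_j\ge 0,\ \sum_j x_j=1\}$; $\mathbf{e}_j$ is the $j$-th standard basis vector. A learning dynamic over $n$ actions is specified by a conversion function $f:\mathbb{R}^n\to\Delta^n$: given an initial state $\mathbf{q}^0\in\mathbb{R}^n$ and an input function $\mathbf{p}:[0,\infty)\to\mathbb{R}^n$ square integrable on bounded intervals, the state is $\mathbf{q}(t)=\mathbf{q}^0+\int_0^t\mathbf{p}(\tau)\,d\tau$ and the strategy is $\mathbf{x}(t)=f(\mathbf{q}(t))$. The learning operator with shift $\mathbf{x}^*\in\mathbb{R}^n$ has state $\mathbf{q}$, input $\mathbf{p}$, output $\mathbf{x}-\mathbf{x}^*$; it is lossless via a storage function $L:\mathbb{R}^n\to\mathbb{R}$ if for every $\mathbf{q}^0$, every $\mathbf{p}$ and every $t\ge0$, $L(\mathbf{q}(t))=L(\mathbf{q}^0)+\int_0^t\langle\mathbf{p}(\tau),\mathbf{x}(\tau)-\mathbf{x}^*\rangle\,d\tau$, and finitely lossless if lossless via a storage function bounded from below. A learning dynamic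 is lossless if its learning operator with any shift is lossless; it is finitely lossless if for every action $j$ its learning operator with shift $\mathbf{e}_j$ is finitely lossless. *)

From HB Require Import structures.
From mathcomp Require Import all_boot all_order all_algebra.
From mathcomp Require Import all_classical all_reals all_analysis.
Set Implicit Arguments. Unset Strict Implicit. Unset Printing Implicit Defensive.
Import Order.TTheory GRing.Theory Num.Theory.
Import numFieldNormedType.Exports.
Local Open Scope classical_set_scope.
Local Open Scope ring_scope.

Section LearningDynamics.
Variables (R : realType) (n : nat).

Notation vec := 'rV[R]_n.
Notation mu := (@lebesgue_measure R).

Definition in_simplex (x : vec) : Prop :=
  (forall j : 'I_n, 0 <= x 0 j) /\ \sum_(j < n) x 0 j = 1.

Definition basis_vec (j : 'I_n) : vec := \row_(i < n) (if i == j then 1 else 0).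

Definition inner (u v : vec) : R := \sum_(j < n) u 0 j * v 0 j.

(* An admissible input: p : [0,oo) -> R^n, square integrable on bounded
   intervals (componentwise; the integrability includes measurability). *)
Definition admissible_input (p : R -> vec) : Prop :=
  forall (T : R) (j : 'I_n), 0 <= T ->
    mu.-integrable `[0, T] (fun tau => ((p tau 0 j) ^+ 2)%:E).

Definition state (q0 : vec) (p : R -> vec) (t : R) : vec :=
  q0 + \row_(j < n) (\int[mu]_(tau in `[0, t]) p tau 0 j).

Definition lossless_via (f : vec -> vec) (xs : vec) (L : vec -> R) : Prop :=
  forall (q0 : vec) (p : R -> vec) (t : R),
    admissible_input p -> 0 <= t ->
    mu.-integrable `[0, t]
      (fun tau => (inner (p tau) (f (state q0 p tau) - xs))%:E) /\
    L (state q0 p t) =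
      L q0 + \int[mu]_(tau in `[0, t]) inner (p tau) (f (state q0 p tau) - xs).

Definition lossless_operator (f : vec -> vec) (xs : vec) : Prop :=
  exists L : vec -> R, lossless_via f xs L.

Definition finitely_lossless_operator (f : vec -> vec) (xs : vec) : Prop :=
  exists L : vec -> R, (exists m : R, forall q, m <= L q) /\ lossless_via f xs L.

Definition conversion_function (f : vec -> vec) : Prop :=
  forall q : vec, in_simplex (f q).

Definition lossless_dynamic (f : vec -> vec) : Prop :=
  conversion_function f /\ forall xs : vec, lossless_operator f xs.

Definition finitely_lossless_dynamic (f : vec -> vec) : Prop :=
  conversion_function f /\
  forall j : 'I_n, finitely_lossless_operator f (basis_vec j).

End LearningDynamics.

Definition convex_comb (R : realType) (n k : nat)
  (alpha : 'I_k -> R) (fs : 'I_k -> 'rV[R]_n -> 'rV[R]_n) : 'rV[R]_n -> 'rV[R]_n :=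
  fun q => \sum_(l < k) alpha l *: fs l q.

From HB Require Import structures.
From mathcomp Require Import all_boot all_order all_algebra.
From mathcomp Require Import all_classical all_reals all_analysis.
Import Order.TTheory GRing.Theory Num.Theory.
Local Open Scope ring_scope.

(* If L_l is a storage function for f_l with shift xs, then sum_l alpha_l L_l
   is one for sum_l alpha_l f_l: as the weights sum to 1, the output
   sum_l alpha_l f_l - xs equals sum_l alpha_l (f_l - xs), and the supplied
   power <p, x - xs> and its integral are linear in x.  Nonnegative weights
   moreover keep values in the simplex and storage functions bounded below. *)

Section RintegralSum.
Context {d} {T : measurableType d} {R : realType} {mu : {measure set T -> \bar R}}.
Context {D : set T} {I : Type} (s : seq I) {g : I -> T -> R}.
Hypotheses (mD : measurable D) (intg : forall i, mu.-integrable D (EFin \o g i)).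

Lemma integrable_Rsum : mu.-integrable D (fun x => (\sum_(i <- s) g i x)%:E).
Proof.
apply: (eq_integrable mD (fun x => \sum_(i <- s) (g i x)%:E)%E).
  by move=> x _; rewrite sumEFin.
by apply: (integrable_sum mD) => i _; exact: intg.
Qed.

Lemma Rintegral_sum :
  \int[mu]_(x in D) (\sum_(i <- s) g i x) = \sum_(i <- s) \int[mu]_(x in D) g i x.
Proof.
apply/EFin_inj; rewrite -sumEFin.
rewrite fineK; last exact: integrable_fin_num integrable_Rsum.
under eq_integral do rewrite -sumEFin.
rewrite integral_sum //; apply: eq_bigr => i _.
by rewrite fineK //; exact: integrable_fin_num (intg i).
Qed.

End RintegralSum.

Lemma inner_sumZr (R : realType) (n : nat) (I : Type) (r : seq I) (p : 'rV[R]_n)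
    (a : I -> R) (v : I -> 'rV[R]_n) :
  inner p (\sum_(l <- r) a l *: v l) = \sum_(l <- r) a l * inner p (v l).
Proof.
rewrite /inner; under eq_bigr do rewrite summxE big_distrr.
rewrite exchange_big; apply: eq_bigr => l _.
rewrite big_distrr; apply: eq_bigr => j _.
by rewrite mxE; exact: mulrCA.
Qed.

Lemma in_simplex_sum (R : realType) (n : nat) (I : Type) (r : seq I)
    (a : I -> R) (x : I -> 'rV[R]_n) :
  (forall l, 0 <= a l) -> \sum_(l <- r) a l = 1 ->
  (forall l, in_simplex (x l)) -> in_simplex (\sum_(l <- r) a l *: x l).
Proof.
move=> a_ge0 a_sum x_simplex; split=> [j|].
  rewrite summxE; apply: sumr_ge0 => l _.
  by rewrite mxE mulr_ge0 // (x_simplex l).1.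
under eq_bigr do rewrite summxE.
rewrite exchange_big -a_sum; apply: eq_bigr => l _.
under eq_bigr do rewrite mxE.
by rewrite -big_distrr /= (x_simplex l).2 mulr1.
Qed.

Section ConvexCombination.
Variables (R : realType) (n k : nat) (fs : 'I_k -> 'rV[R]_n -> 'rV[R]_n).
Variable alpha : 'I_k -> R.
Hypothesis alpha_sum : \sum_(l < k) alpha l = 1.

Lemma convex_combBr (xs q : 'rV[R]_n) :
  convex_comb alpha fs q - xs = \sum_(l < k) alpha l *: (fs l q - xs).
Proof.
rewrite /convex_comb -[X in _ - X]scale1r -alpha_sum scaler_suml -sumrB.
by apply: eq_bigr => l _; rewrite scalerBr.
Qed.

Lemma lossless_via_convex_comb (xs : 'rV[R]_n) (L : 'I_k -> 'rV[R]_n -> R) :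
  (forall l, lossless_via (fs l) xs (L l)) ->
  lossless_via (convex_comb alpha fs) xs (fun q => \sum_(l < k) alpha l * L l q).
Proof.
move=> L_lossless q0 p t p_adm t_ge0.
have mD : measurable (`[0, t]%classic : set (measurableTypeR R)).
  exact: measurable_itv.
pose power l tau := inner (p tau) (fs l (state q0 p tau) - xs).
have power_int l : (@lebesgue_measure R).-integrable `[0, t] (EFin \o power l).
  exact: (L_lossless l q0 p t p_adm t_ge0).1.
have wpower_int l : (@lebesgue_measure R).-integrable `[0, t]
    (EFin \o (fun tau => alpha l * power l tau)).
  apply: (eq_integrable mD (fun tau => (alpha l)%:E * (power l tau)%:E)%E).
    by move=> tau _; rewrite /= EFinM.
  exact: (integrableZl mD _ (power_int l)).
have power_comb tau : inner (p tau) (convex_comb alpha fs (state q0 p tau) - xs)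
    = \sum_(l < k) alpha l * power l tau.
  by rewrite convex_combBr inner_sumZr.
split.
  apply: (eq_integrable mD _ _ _ (integrable_Rsum _ mD wpower_int)) => tau _.
  by rewrite power_comb.
rewrite (eq_Rintegral (@lebesgue_measure R)
  (fun tau (_ : tau \in `[0, t]%classic) => power_comb tau)).
rewrite Rintegral_sum // -big_split /=; apply: eq_bigr => l _.
by rewrite RintegralZl // (L_lossless l q0 p t p_adm t_ge0).2 mulrDr.
Qed.

Lemma lossless_operator_convex_comb (xs : 'rV[R]_n) :
  (forall l, lossless_operator (fs l) xs) ->
  lossless_operator (convex_comb alpha fs) xs.
Proof.
move=> /choice[L L_lossless].
by exists (fun q => \sum_(l < k) alpha l * L l q); exact: lossless_via_convex_comb.
Qed.

Hypothesis alpha_ge0 : forall l, 0 <= alpha l.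

Lemma finitely_lossless_operator_convex_comb (xs : 'rV[R]_n) :
  (forall l, finitely_lossless_operator (fs l) xs) ->
  finitely_lossless_operator (convex_comb alpha fs) xs.
Proof.
move=> /choice[L L_lossless].
have [m L_ge_m] := choice (fun l => (L_lossless l).1).
exists (fun q => \sum_(l < k) alpha l * L l q); split.
  exists (\sum_(l < k) alpha l * m l) => q.
  by apply: ler_sum => l _; rewrite ler_wpM2l.
by apply: lossless_via_convex_comb => l; exact: (L_lossless l).2.
Qed.

Lemma conversion_function_convex_comb :
  (forall l, conversion_function (fs l)) ->
  conversion_function (convex_comb alpha fs).
Proof. by move=> fs_conv q; apply: in_simplex_sum => // l; exact: fs_conv. Qed.

End ConvexCombination.

Theorem theorem5p5 (R : realType) (n k : nat)
  (fs : 'I_k -> 'rV[R]_n -> 'rV[R]_n) (alpha : 'I_k -> R)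
  (alpha_ge0 : forall l, 0 <= alpha l)
  (alpha_sum : \sum_(l < k) alpha l = 1) :
  ((forall l, lossless_dynamic (fs l)) ->
     lossless_dynamic (convex_comb alpha fs)) /\
  ((forall l, finitely_lossless_dynamic (fs l)) ->
     finitely_lossless_dynamic (convex_comb alpha fs)).
Proof.
split=> fs_lossless; split.
- by apply: conversion_function_convex_comb => // l; exact: (fs_lossless l).1.
- move=> xs; apply: lossless_operator_convex_comb => // l.
  exact: (fs_lossless l).2.
- by apply: conversion_function_convex_comb => // l; exact: (fs_lossless l).1.
- move=> j; apply: finitely_lossless_operator_convex_comb => // l.
  exact: (fs_lossless l).2.
Qed.
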